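(* Let $A$ be a two-dimensional evolution algebra over a field $\mathbb{K}$ with $A^2=A$. Then $A$ satisfies a nontrivial $3$-linear identity $w(x,y,z)=\lambda_1(xy)z+\lambda_2(yz)x+\lambda_3(zx)y$ (with $(\lambda_1,\lambda_2,\lambda_3)\neq(0,0,0)$) if and only if $A$ is isomorphic to $A_1$; and the $3$-linear identities satisfied by $A_1$ are exactly those with $\lambda_1+\lambda_2+\lambda_3=0$, i.e. those following from the associative identity $(xy)z=x(yz)$.
   Context: An evolution algebra over $\mathbb{K}$ is a $\mathbb{K}$-algebra with a basis $\{e_i\}$ (natural basis) such that $e_ie_j=0$ for $i\neq j$; evolution algebras are commutative. In the free nonassociative commutative algebra on generators $X$, a $3$-linear element in distinct generators $x,y,z$ has the form $w(x,y,z)=\lambda_1(xy)z+\lambda_2(yz)x+\lambda_3(zx)y$, $\lambda_i\in\mathbb{K}$; $A$ satisfies $w$ if $w(a,b,c)=0$ for all $a,b,c\in A$. $A_1$ is the evolution algebra with natural basis $\{e_1,e_2\}$, $e_1^2=e_1$, $e_2^2=e_2$. *)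

From HB Require Import structures.
From mathcomp Require Import all_boot all_order all_algebra.
Set Implicit Arguments. Unset Strict Implicit. Unset Printing Implicit Defensive.
Import GRing.Theory.
Local Open Scope ring_scope.

(* A two-dimensional evolution algebra over K, presented on K^2 = 'rV[K]_2
   with natural basis e_0, e_1 (the standard row vectors) and structure
   matrix a : e_i * e_i = \sum_j a i j e_j  (i.e. e_i^2 = row i a),
   e_i * e_j = 0 for i <> j. *)
Definition evo_mul (K : fieldType) (a : 'M[K]_2) (x y : 'rV[K]_2) : 'rV[K]_2 :=
  \sum_(i < 2) (x 0 i * y 0 i) *: row i a.

Definition evo_sq_full (K : fieldType) (a : 'M[K]_2) : Prop :=
  forall z : 'rV[K]_2, exists (n : nat) (xs ys : 'I_n -> 'rV[K]_2),
    z = \sum_(k < n) evo_mul a (xs k) (ys k).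

Definition evo_satisfies (K : fieldType) (a : 'M[K]_2) (l1 l2 l3 : K) : Prop :=
  forall x y z : 'rV[K]_2,
    l1 *: evo_mul a (evo_mul a x y) z + l2 *: evo_mul a (evo_mul a y z) x
      + l3 *: evo_mul a (evo_mul a z x) y = 0.

Definition evo_iso (K : fieldType) (a b : 'M[K]_2) : Prop :=
  exists f : 'rV[K]_2 -> 'rV[K]_2,
    [/\ (forall (c : K) (x y : 'rV[K]_2), f (c *: x + y) = c *: f x + f y),
        bijective f &
        forall x y, f (evo_mul a x y) = evo_mul b (f x) (f y)].

(* A_1 : e_1^2 = e_1, e_2^2 = e_2, i.e. structure matrix the identity. *)
Definition A1_mx (K : fieldType) : 'M[K]_2 := 1%:M.

From HB Require Import structures.
From mathcomp Require Import all_boot all_order all_algebra.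
From mathcomp Require Import ring.
Set Implicit Arguments. Unset Strict Implicit. Unset Printing Implicit Defensive.
Import GRing.Theory.
Local Open Scope ring_scope.

(* The product of the evolution algebra with structure matrix [a] is the
   coordinatewise product followed by [a], so [A^2] is the row space of [a]
   and [A^2 = A] means that [a] is invertible; in particular no row of [a]
   vanishes.  Evaluating an identity on [(e_i, e_i, e_k)] and its cyclic
   shifts gives [l * a i k *: row k a = 0] for each coefficient [l], so a
   nontrivial identity forces [a] to be diagonal, and right multiplication by
   an invertible diagonal matrix is an isomorphism onto [A_1].  In [A_1] the
   product is coordinatewise, hence associative and commutative, so
   [w(x,y,z) = (l1 + l2 + l3) xyz]. *)

Definition hadamard (R : pzSemiRingType) (n : nat) (x y : 'rV[R]_n) : 'rV[R]_n :=
  \row_j (x 0 j * y 0 j).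

Lemma unitmx_row_neq0 (R : comUnitRingType) (n : nat) (A : 'M[R]_n) (i : 'I_n) :
  A \in unitmx -> row i A != 0.
Proof.
move=> A_unit; apply/eqP => rowA0.
have : row i (A *m invmx A) = 0 by rewrite row_mul rowA0 mul0mx.
rewrite mulmxV // row1 => /rowP/(_ i); rewrite !mxE !eqxx.
by move/eqP; rewrite oner_eq0.
Qed.

Section EvolutionAlgebra.

Variable K : fieldType.
Implicit Types (a : 'M[K]_2) (x y z : 'rV[K]_2).

Lemma evo_mulE a x y : evo_mul a x y = hadamard x y *m a.
Proof. by rewrite mulmx_sum_row; apply: eq_bigr => i _; rewrite mxE. Qed.

Lemma evo_mul_deltar a x k : evo_mul a x 'e_k = x 0 k *: row k a.
Proof.
rewrite evo_mulE mulmx_sum_row (bigD1 k) //= big1 ?addr0 => [|i ik].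
  by rewrite !mxE !eqxx mulr1.
by rewrite !mxE (negbTE ik) mulr0 scale0r.
Qed.

Lemma evo_mul_A1 x y : evo_mul (A1_mx K) x y = hadamard x y.
Proof. by rewrite evo_mulE mulmx1. Qed.

Lemma evo_sq_full_unitmx a : evo_sq_full a -> a \in unitmx.
Proof.
move=> sq_full.
have in_rowspace z : exists u, z = u *m a.
  have [n [xs [ys ->]]] := sq_full z.
  by exists (\sum_(k < n) hadamard (xs k) (ys k)); rewrite mulmx_suml;
    apply: eq_bigr => k _; rewrite evo_mulE.
have [u Hu] := fin_all_exists (fun i : 'I_2 => in_rowspace 'e_i).
suff /mulmx1_unit[] : \matrix_i u i *m a = 1%:M by [].
by apply/row_matrixP => i; rewrite row_mul rowK row1 -Hu.
Qed.

Lemma evo_satisfies_offdiag a (l1 l2 l3 : K) (i k : 'I_2) :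
  evo_satisfies a l1 l2 l3 -> i != k ->
  [/\ (l1 * a i k) *: row k a = 0, (l2 * a i k) *: row k a = 0
    & (l3 * a i k) *: row k a = 0].
Proof.
move=> sat ik.
have e_ik : ('e_i : 'rV[K]_2) 0 k = 0 by rewrite mxE eq_sym (negbTE ik).
have e_ki : ('e_k : 'rV[K]_2) 0 i = 0 by rewrite mxE (negbTE ik).
have evo_ii_k : evo_mul a (evo_mul a 'e_i 'e_i) 'e_k = a i k *: row k a.
  by rewrite !evo_mul_deltar !mxE !eqxx mul1r.
have evo_ik_i : evo_mul a (evo_mul a 'e_i 'e_k) 'e_i = 0.
  by rewrite !evo_mul_deltar e_ik scale0r mxE scale0r.
have evo_ki_i : evo_mul a (evo_mul a 'e_k 'e_i) 'e_i = 0.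
  by rewrite !evo_mul_deltar e_ki scale0r mxE scale0r.
have := sat 'e_i 'e_i 'e_k; have := sat 'e_k 'e_i 'e_i; have := sat 'e_i 'e_k 'e_i.
by rewrite evo_ii_k evo_ik_i evo_ki_i !scaler0 !scalerA !(addr0, add0r).
Qed.

Lemma evo_satisfies_offdiag_eq0 a (l1 l2 l3 : K) (i k : 'I_2) :
  (l1, l2, l3) != (0, 0, 0) -> row k a != 0 ->
  evo_satisfies a l1 l2 l3 -> i != k -> a i k = 0.
Proof.
move=> l_neq0 rowk_neq0 sat ik; apply/eqP; apply: contraTT l_neq0 => aik_neq0.
have [] := evo_satisfies_offdiag sat ik.
move=> /eqP + /eqP + /eqP; rewrite !scalemx_eq0 !mulf_eq0.
rewrite (negbTE aik_neq0) (negbTE rowk_neq0) !orbF.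
by move=> /eqP-> /eqP-> /eqP->; rewrite negbK.
Qed.

Lemma evo_iso_diag_A1 (d : 'rV[K]_2) :
  diag_mx d \in unitmx -> evo_iso (diag_mx d) (A1_mx K).
Proof.
move=> d_unit; exists (mulmx^~ (diag_mx d)); split.
- by move=> c x y; rewrite mulmxDl scalemxAl.
- by exists (mulmx^~ (invmx (diag_mx d))) => x; rewrite ?mulmxK ?mulmxKV.
- move=> x y; rewrite evo_mul_A1 evo_mulE !mul_mx_diag.
  by apply/rowP => j; rewrite !mxE; ring.
Qed.

Lemma evo_iso_satisfies a b (l1 l2 l3 : K) :
  evo_iso a b -> evo_satisfies b l1 l2 l3 -> evo_satisfies a l1 l2 l3.
Proof.
move=> [f [f_lin [g fK _] f_mul]] sat x y z.
have fD u v : f (u + v) = f u + f v by have := f_lin 1 u v; rewrite !scale1r.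
have f0 : f 0 = 0 by apply: (addIr (f 0)); rewrite add0r -fD addr0.
have fZ c u : f (c *: u) = c *: f u by have := f_lin c u 0; rewrite !addr0 f0 addr0.
by apply: (can_inj fK); rewrite !fD !fZ !f_mul f0.
Qed.

Lemma evo_satisfies_A1 (l1 l2 l3 : K) :
  evo_satisfies (A1_mx K) l1 l2 l3 <-> l1 + l2 + l3 = 0.
Proof.
split=> [sat | l_sum0 x y z].
  have /rowP/(_ 0) := sat (const_mx 1) (const_mx 1) (const_mx 1).
  by rewrite !evo_mul_A1 !mxE !mulr1.
rewrite !evo_mul_A1; apply/rowP => j; rewrite !mxE.
by rewrite -[RHS](mul0r (x 0 j * y 0 j * z 0 j)) -l_sum0; ring.
Qed.

End EvolutionAlgebra.

Theorem proposition4p1 (K : fieldType) (a : 'M[K]_2) :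
  evo_sq_full a ->
  ((exists l1 l2 l3 : K, (l1, l2, l3) != (0, 0, 0) /\ evo_satisfies a l1 l2 l3)
     <-> evo_iso a (A1_mx K))
  /\ (forall l1 l2 l3 : K, evo_satisfies (A1_mx K) l1 l2 l3 <-> l1 + l2 + l3 = 0).
Proof.
move=> sq_full; have a_unit := evo_sq_full_unitmx sq_full.
split; last exact: evo_satisfies_A1.
split=> [[l1 [l2 [l3 [l_neq0 sat]]]] | a_iso].
  have /diag_mxP[d a_diag] : is_diag_mx a.
    apply/is_diag_mxP => i k ik.
    exact: evo_satisfies_offdiag_eq0 l_neq0 (unitmx_row_neq0 k a_unit) sat ik.
  by rewrite a_diag in a_unit *; apply: evo_iso_diag_A1.
exists 1, (-1), 0; split; first by rewrite !xpair_eqE oner_eq0.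
by apply: evo_iso_satisfies a_iso _; apply/evo_satisfies_A1; rewrite addr0 subrr.
Qed.
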